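(* Let $\Delta$ be a simplicial complex on $X=\{x_1,\ldots,x_n\}$ and $k\in\mathbb{N}$ a positive integer. Then $\Delta$ is shellable if and only if its expansion $\Delta^{\mathbf{k}}$ is $k$-shellable.
   Context: For faces $F_1,\dots,F_r$, $\langle F_1,\ldots,F_r\rangle$ denotes the simplicial complex with facets $F_1,\dots,F_r$. $\Delta$ is shellable if its facets can be ordered $F_1,\ldots,F_r$ so that for all $j\ge2$, $\langle F_j\rangle\cap\langle F_1,\ldots,F_{j-1}\rangle$ is pure of dimension $\dim F_j-1$. Expansion: let $X^{\mathbf{k}}=\{x_{ij}:1\le i\le n,1\le j\le k\}$; for $F\subseteq X$, $F^{\mathbf{k}}=\{x_{ij}: x_i\in F, 1\le j\le k\}$; if $\Delta=\langle F_1,\ldots,F_r\rangle$ then $\Delta^{\mathbf{k}}=\langle F_1^{\mathbf{k}},\ldots,F_r^{\mathbf{k}}\rangle$ on $X^{\mathbf{k}}$. $k$-shellability: let $\Gamma$ be a simplicial complex of dimension $d$ and $1\le k\le d+1$; $\Gamma$ is $k$-shellable if its facets can be ordered $F_1,\ldots,F_r$ such that for every $j=2,\ldots,r$, $\Gamma_j=\langle F_j\rangle\cap\langle F_1,\ldots,F_{j-1}\rangle$ satisfies (i) $\Gamma_j$ is generated by a nonempty set of faces of $\langle F_j\rangle$ of dimension $|F_j|-k-1$; (ii) if $\Gamma_j$ has more than one facet, then for every two distinct facets $\sigma,\tau$ of $\Gamma_j$, $F_j\subseteq\sigma\cup\tau$. *)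

From mathcomp Require Import all_boot.
Set Implicit Arguments. Unset Strict Implicit. Unset Printing Implicit Defensive.

Section Complexes.
Variable T : finType.

Definition is_complex (D : {set {set T}}) : Prop :=
  forall F G : {set T}, F \in D -> G \subset F -> G \in D.

Definition complex_on (D : {set {set T}}) : Prop :=
  is_complex D /\ forall x : T, [set x] \in D.

Definition facets (D : {set {set T}}) : {set {set T}} :=
  [set F in D | [forall G in D, (F \subset G) ==> (G == F)]].

Definition gen (A : {set {set T}}) : {set {set T}} :=
  [set G : {set T} | [exists F in A, G \subset F]].

(* Gamma_j = <F_j> \cap <F_1,...,F_{j-1}>  (0-based: j-th element, prefix take j). *)
Definition inter_prev (s : seq {set T}) (j : nat) : {set {set T}} :=
  gen [set nth set0 s j] :&: gen [set F in take j s].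

Definition facet_order (D : {set {set T}}) (s : seq {set T}) : Prop :=
  perm_eq s (enum (facets D)).

(* Gamma is pure of dimension m-1, i.e. all its facets have cardinality m. *)
Definition pure_card (G : {set {set T}}) (m : nat) : Prop :=
  forall S, S \in facets G -> #|S| = m.

(* Shellability (non-pure sense): Gamma_j pure of dimension dim F_j - 1. *)
Definition shellable (D : {set {set T}}) : Prop :=
  exists s : seq {set T}, facet_order D s /\
    forall j, 0 < j < size s ->
      pure_card (inter_prev s j) (#|nth set0 s j| - 1).

(* d + 1 where d = dim D (max cardinality of a face). *)
Definition dim_succ (D : {set {set T}}) : nat := \max_(F in D) #|F|.

(* k-shellability. Faces of dimension |F_j|-k-1 are those of cardinality
   |F_j|-k (requiring k <= |F_j| so that this is a genuine dimension >= -1). *)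
Definition k_shellable (k : nat) (D : {set {set T}}) : Prop :=
  1 <= k <= dim_succ D /\
  exists s : seq {set T}, facet_order D s /\
    forall j, 0 < j < size s ->
      let Fj := nth set0 s j in
      let Gj := inter_prev s j in
      (k <= #|Fj| /\
       exists A : {set {set T}}, A != set0 /\
         (forall G, G \in A -> G \subset Fj /\ #|G| = #|Fj| - k) /\
         Gj = gen A) /\
      (1 < #|facets Gj| ->
         forall S U, S \in facets Gj -> U \in facets Gj -> S != U ->
           Fj \subset S :|: U).

End Complexes.

(* Expansion: vertices x_{ij} encoded as pairs (x_i, j) in T * 'I_k. *)
Definition expand_face (T : finType) (k : nat) (F : {set T}) : {set T * 'I_k} :=
  [set p : T * 'I_k | p.1 \in F].

Definition expansion (T : finType) (k : nat) (D : {set {set T}})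
  : {set {set T * 'I_k}} :=
  gen [set expand_face k F | F in facets D].

From mathcomp Require Import all_boot.
Set Implicit Arguments. Unset Strict Implicit. Unset Printing Implicit Defensive.

(* Expansion F |-> F^k is injective, monotone, commutes with unions and
   intersections and multiplies cardinalities by k.  Since
   Gamma_j = <F_j :&: F_i | i < j>, the Gamma_j of the expanded shelling
   order is the expansion of the Gamma_j of the original one, and its facets
   are the expansions of the facets of Gamma_j: they have codimension k in
   F_j^k exactly when those of Gamma_j have codimension 1 in F_j.  Condition
   (ii) of k-shellability is then automatic, as two distinct codimension-one
   subsets of F_j cover F_j. *)

Section Generated.
Variable T : finType.
Implicit Types (A : {set {set T}}) (F G S U : {set T}) (s : seq {set T}).

Lemma facets_subset A : facets A \subset A.
Proof. by apply/subsetP => F; rewrite inE => /andP[]. Qed.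

Lemma facet_above A G : G \in A -> exists2 F, F \in facets A & G \subset F.
Proof.
move=> GA.
have AG : [pred F | (F \in A) && (G \subset F)] G by rewrite /= GA subxx.
have [F /andP[FA GF] F_max] := arg_maxnP (fun F => #|F|) AG.
exists F => //; rewrite inE FA; apply/forall_inP => H HA; apply/implyP => FH.
have := F_max H; rewrite /= HA (subset_trans GF FH) => /(_ isT) HF.
by rewrite eq_sym eqEcard FH HF.
Qed.

Lemma facets_neq0 A : A != set0 -> facets A != set0.
Proof.
by case/set0Pn => G /facet_above[F FA _]; apply/set0Pn; exists F.
Qed.

Lemma facets_gen A : facets (gen A) = facets A.
Proof.
have A_gen F : F \in A -> F \in gen A.
  by move=> FA; rewrite inE; apply/exists_inP; exists F.
apply/setP => F; apply/setIdP/setIdP => -[FA /forall_inP F_max].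
- move: FA; rewrite inE => /exists_inP[G GA FG].
  have /eqP GF := implyP (F_max G (A_gen G GA)) FG; subst G.
  split=> //; apply/forall_inP => H HA; exact: F_max (A_gen H HA).
- split; first exact: A_gen.
  apply/forall_inP => G; rewrite inE => /exists_inP[H HA GH]; apply/implyP => FG.
  have /eqP HF := implyP (F_max H HA) (subset_trans FG GH); subst H.
  by rewrite eqEsubset GH FG.
Qed.

Lemma gen_facets A : gen (facets A) = gen A.
Proof.
apply/setP => G; rewrite !inE; apply/exists_inP/exists_inP => -[F FA GF].
- by exists F => //; apply: (subsetP (facets_subset A)).
- have [H HA FH] := facet_above FA; exists H => //; exact: subset_trans GF FH.
Qed.

Lemma facets_idem A : facets (facets A) = facets A.
Proof.
apply/eqP; rewrite eqEsubset facets_subset; apply/subsetP => F FA.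
rewrite inE FA /=; apply/forall_inP => G /(subsetP (facets_subset A)).
by case/setIdP: FA => _ /forall_inP; apply.
Qed.

Lemma facet_card_gt0 A x F : [set x] \in A -> F \in facets A -> 0 < #|F|.
Proof.
move=> xA /setIdP[_ /forall_inP F_max]; rewrite card_gt0; apply/set0Pn.
have /implyP := F_max _ xA.
case: (set_0Vmem F) => [->|[y yF] _]; last by exists y.
by rewrite sub0set => /(_ isT) /eqP/setP/(_ x); rewrite !inE eqxx.
Qed.

Lemma nth_facet_order A s j :
  facet_order A s -> j < size s -> nth set0 s j \in facets A.
Proof. by move=> fo js; rewrite -mem_enum -(perm_mem fo) mem_nth. Qed.

Definition prev_meets s j : {set {set T}} :=
  [set nth set0 s j :&: F | F in [set F in take j s]].

Lemma inter_prev_meets s j : inter_prev s j = gen (prev_meets s j).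
Proof.
apply/setP => G; rewrite !inE; apply/andP/exists_inP.
- case=> /exists_inP[F1]; rewrite inE => /eqP -> GF1 /exists_inP[F F_prev GF].
  by exists (nth set0 s j :&: F); [apply: imset_f | rewrite subsetI GF1].
- case=> _ /imsetP[F F_prev ->]; rewrite subsetI => /andP[GFj GF]; split.
    by apply/exists_inP; exists (nth set0 s j); rewrite ?inE.
  by apply/exists_inP; exists F.
Qed.

Lemma prev_meets_subset s j G : G \in prev_meets s j -> G \subset nth set0 s j.
Proof. by case/imsetP => F _ ->; apply: subsetIl. Qed.

Lemma prev_meets_neq0 s j : 0 < j < size s -> prev_meets s j != set0.
Proof.
case/andP=> j_gt0 js; apply/set0Pn.
exists (nth set0 s j :&: nth set0 (take j s) 0); apply: imset_f.
by rewrite inE mem_nth // size_take js.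
Qed.

Lemma facets_inter_prev_subset s j S :
  S \in facets (inter_prev s j) -> S \subset nth set0 s j.
Proof.
rewrite inter_prev_meets facets_gen => /(subsetP (facets_subset _)).
exact: prev_meets_subset.
Qed.

Lemma codim1_cover F S U :
  S \subset F -> U \subset F -> #|S| = #|F| - 1 -> #|U| = #|F| - 1 ->
  S != U -> F \subset S :|: U.
Proof.
move=> SF UF cS cU SneU; apply/subsetP => x xF; rewrite inE.
apply: contraNT SneU; rewrite negb_or => /andP[xS xU].
have drop_x (X : {set T}) :
    X \subset F -> x \notin X -> #|X| = #|F| - 1 -> X = F :\ x.
  move=> XF xX cX; apply/eqP.
  rewrite eqEcard cX (cardsD1 x F) xF add1n subSS subn0 leqnn andbT.
  apply/subsetP => y yX; rewrite !inE (subsetP XF) // andbT.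
  by apply: contraNneq xX => <-.
by rewrite (drop_x S SF xS cS) (drop_x U UF xU cU) eqxx.
Qed.

End Generated.

Definition shelling_step (T : finType) (s : seq {set T}) (j : nat) : Prop :=
  pure_card (inter_prev s j) (#|nth set0 s j| - 1).

(* Verbatim the j-th clause of [k_shellable], so that the two are convertible. *)
Definition k_shelling_step (T : finType) (k : nat) (s : seq {set T}) (j : nat)
  : Prop :=
  let Fj := nth set0 s j in
  let Gj := inter_prev s j in
  (k <= #|Fj| /\
   exists A : {set {set T}}, A != set0 /\
     (forall G, G \in A -> G \subset Fj /\ #|G| = #|Fj| - k) /\
     Gj = gen A) /\
  (1 < #|facets Gj| ->
     forall S U, S \in facets Gj -> U \in facets Gj -> S != U ->
       Fj \subset S :|: U).

Section Expansion.
Variables (T : finType) (k : nat).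
Hypothesis k_gt0 : 0 < k.
Implicit Types (A D : {set {set T}}) (F G S U : {set T}) (s : seq {set T}).
Local Notation e := (@expand_face T k).

Definition contract_face (E : {set T * 'I_k}) : {set T} :=
  [set x | (x, Ordinal k_gt0) \in E].

Lemma expand_faceK : cancel e contract_face.
Proof. by move=> F; apply/setP => x; rewrite !inE. Qed.

Lemma expand_face_inj : injective e.
Proof. exact: can_inj expand_faceK. Qed.

Lemma card_expand_face F : #|e F| = #|F| * k.
Proof.
have -> : e F = setX F [set: 'I_k] by apply/setP => -[x i]; rewrite !inE andbT.
by rewrite cardsX cardsT card_ord.
Qed.

Lemma expand_face_subset F G : (e F \subset e G) = (F \subset G).
Proof.
apply/subsetP/subsetP => FG.
- by move=> x; have := FG (x, Ordinal k_gt0); rewrite !inE.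
- by move=> p; rewrite !inE; apply: FG.
Qed.

Lemma expand_faceI F G : e (F :&: G) = e F :&: e G.
Proof. by apply/setP => p; rewrite !inE. Qed.

Lemma expand_faceU F G : e (F :|: G) = e F :|: e G.
Proof. by apply/setP => p; rewrite !inE. Qed.

Lemma facets_expand A : facets (e @: A) = e @: facets A.
Proof.
apply/setP => E; apply/setIdP/imsetP.
- case=> /imsetP[F FA ->] /forall_inP F_max; exists F => //.
  rewrite inE FA; apply/forall_inP => G GA; apply/implyP => FG.
  have /implyP := F_max _ (imset_f e GA).
  by rewrite expand_face_subset => /(_ FG) /eqP /expand_face_inj ->.
- case=> F /setIdP[FA /forall_inP F_max] ->; split; first exact: imset_f.
  apply/forall_inP => _ /imsetP[G GA ->]; rewrite expand_face_subset.
  by apply/implyP => FG; rewrite (eqP (implyP (F_max G GA) FG)).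
Qed.

Lemma inter_prev_expand s j :
  j < size s -> inter_prev (map e s) j = gen (e @: prev_meets s j).
Proof.
move=> js; rewrite inter_prev_meets; congr gen.
rewrite /prev_meets (nth_map set0) // -map_take.
apply/setP => E; apply/imsetP/imsetP.
- case=> X; rewrite inE => /mapP[F F_prev ->] ->.
  by exists (nth set0 s j :&: F); rewrite ?expand_faceI // imset_f ?inE.
- case=> X /imsetP[F F_prev ->] ->; exists (e F); last by rewrite expand_faceI.
  by rewrite inE in F_prev; rewrite inE map_f.
Qed.

Lemma facets_inter_prev_expand s j : j < size s ->
  facets (inter_prev (map e s) j) = e @: facets (inter_prev s j).
Proof.
move=> js; rewrite inter_prev_expand // inter_prev_meets.
by rewrite !facets_gen facets_expand.
Qed.

Lemma inter_prev_expand_facets s j : j < size s ->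
  inter_prev (map e s) j = gen (e @: facets (inter_prev s j)).
Proof.
move=> js; rewrite inter_prev_expand // -gen_facets facets_expand.
by rewrite inter_prev_meets facets_gen.
Qed.

Lemma shelling_step_expand s j :
  0 < #|nth set0 s j| -> 0 < j < size s ->
  shelling_step s j -> k_shelling_step k (map e s) j.
Proof.
move=> Fj_gt0 jP pure; have js : j < size s by case/andP: jP.
rewrite /k_shelling_step; cbv zeta.
rewrite (nth_map set0) // facets_inter_prev_expand //.
set Fj := nth set0 s j; set Gj := inter_prev s j.
have Gj_neq0 : facets Gj != set0.
  by rewrite /Gj inter_prev_meets facets_gen facets_neq0 ?prev_meets_neq0.
split; first split.
- by rewrite card_expand_face leq_pmull.
- exists (e @: facets Gj); split; last split.
  + by rewrite imset_eq0.
  + move=> _ /imsetP[S SF ->].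
    rewrite expand_face_subset facets_inter_prev_subset //.
    by rewrite !card_expand_face pure // mulnBl mul1n.
  + exact: inter_prev_expand_facets.
- move=> _ _ _ /imsetP[S SF ->] /imsetP[U UF ->] SneU.
  rewrite -expand_faceU expand_face_subset codim1_cover ?(pure S) ?(pure U)
    ?(facets_inter_prev_subset SF) ?(facets_inter_prev_subset UF) //.
  by apply: contraNneq SneU => ->.
Qed.

Lemma expand_k_shelling_step s j :
  j < size s -> k_shelling_step k (map e s) j -> shelling_step s j.
Proof.
move=> js; rewrite /k_shelling_step; cbv zeta; rewrite (nth_map set0) //.
case=> [[_ [A [_ [A_faces A_gen]]]] _] S SF.
have : e S \in facets A.
  by rewrite -facets_gen -A_gen facets_inter_prev_expand // imset_f.
case/(subsetP (facets_subset A))/A_faces => _.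
rewrite !card_expand_face => cS; apply/eqP.
by rewrite -(eqn_pmul2r k_gt0) mulnBl mul1n cS.
Qed.

Lemma facets_expansion D : facets (expansion k D) = e @: facets D.
Proof. by rewrite /expansion facets_gen facets_expand facets_idem. Qed.

Lemma facet_order_expand D s :
  facet_order D s <-> facet_order (expansion k D) (map e s).
Proof.
have perm_enum : perm_eq (enum (e @: facets D)) (map e (enum (facets D))).
  apply: uniq_perm; rewrite ?(map_inj_uniq expand_face_inj) ?enum_uniq //.
  by move=> E; rewrite mem_enum; apply/imsetP/mapP => -[F FD ->]; exists F;
    rewrite ?mem_enum // -mem_enum.
rewrite /facet_order facets_expansion; split => fo.
- by apply: perm_trans (perm_map e fo) _; rewrite perm_sym.
- exact: (perm_map_inj expand_face_inj (perm_trans fo perm_enum)).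
Qed.

Lemma facet_order_expansion D (s' : seq {set T * 'I_k}) :
  facet_order (expansion k D) s' -> exists2 s, s' = map e s & facet_order D s.
Proof.
move=> fo'; have s'E : s' = map e (map contract_face s').
  rewrite -map_comp -[LHS]map_id; apply/esym/eq_in_map => E.
  rewrite (perm_mem fo') mem_enum facets_expansion => /imsetP[F _ ->] /=.
  by rewrite expand_faceK.
by exists (map contract_face s') => //; apply/facet_order_expand; rewrite -s'E.
Qed.

Lemma card_face_le_dim_expansion D G :
  G \in D -> #|G| * k <= dim_succ (expansion k D).
Proof.
move=> GD; have [F FD GF] := facet_above GD.
have eG : e G \in expansion k D.
  rewrite inE; apply/exists_inP; exists (e F); first exact: imset_f.
  by rewrite expand_face_subset.
by rewrite /dim_succ -card_expand_face; apply: leq_bigmax_cond.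
Qed.

End Expansion.

Theorem theorem2p8 (n k : nat) (D : {set {set 'I_n}}) :
  0 < n -> 0 < k -> complex_on D ->
  (shellable D <-> k_shellable k (expansion k D)).
Proof.
move=> n_gt0 k_gt0 [_ D_singletons]; pose x0 : 'I_n := Ordinal n_gt0.
have nth_gt0 s j : facet_order D s -> j < size s -> 0 < #|nth set0 s j|.
  move=> fo js; apply: (facet_card_gt0 (D_singletons x0)).
  exact: nth_facet_order fo js.
split.
- case=> s [fo shelling]; split.
    rewrite k_gt0 -{1}(mul1n k) -(cards1 x0).
    exact: card_face_le_dim_expansion.
  exists (map (@expand_face _ k) s).
  split; first exact/(facet_order_expand k_gt0 D).
  move=> j; rewrite size_map => jP; have /andP[_ js] := jP.
  exact: shelling_step_expand (nth_gt0 _ _ fo js) jP (shelling j jP).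
- case=> _ [_ [/(facet_order_expansion k_gt0)[s -> fo] k_shelling]].
  exists s; split=> // j jP; have /andP[_ js] := jP.
  apply: (expand_k_shelling_step k_gt0 js).
  by apply: k_shelling; rewrite size_map.
Qed.
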